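(* Let $S$ be a semiring and let $\mathcal{A}=(A,X,Y,\sigma^A,\delta^A,\omega^A)$ be a Mealy-type weighted automaton over $S$. Then there exists a Moore-type weighted automaton $\mathcal{B}=(B,X,Y,\sigma^B,\delta^B,\omega^B)$ over $S$ such that $[\![\mathcal{A}]\!]_{1n}=[\![\mathcal{B}]\!]_{1n}$ and $[\![\mathcal{A}]\!]_{n1}=[\![\mathcal{B}]\!]_{n1}$. Moreover, $\mathcal{B}$ can be chosen with $|B|\le |A|\cdot(|X|+1)$.
   Context: A semiring $(S,+,\cdot,0,1)$ is a set with $(S,+,0)$ a commutative monoid, $(S,\cdot,1)$ a monoid (not necessarily commutative), $\cdot$ distributing over $+$ on both sides, and $0\cdot s=s\cdot 0=0$. $(X\times Y)^*$ is identified with the set of pairs $(u,v)\in X^*\times Y^*$ with $|u|=|v|$; its empty element is $(\varepsilon,\varepsilon)$. All automata have finite nonempty state set and finite nonempty alphabets $X,Y$. For a map $\delta:Q\times X\times Q\to S$ write $\delta_x(p,q)=\delta(p,x,q)$ (a $Q\times Q$ matrix over $S$), and for a word $w=z_1\cdots z_m\in X^+$ let $\delta_w=\delta_{z_1}\cdot\delta_{z_2}\cdots\delta_{z_m}$ (matrix product, $(\mu_1\cdot\mu_2)(p,q)=\sum_{r\in Q}\mu_1(p,r)\cdot\mu_2(r,q)$). A Mealy-type weighted automaton over $S$ is $\mathcal{A}=(A,X,Y,\sigma,\delta,\omega)$ with $\sigma:A\to S$, $\delta:A\times X\times A\to S$, $\omega:A\times X\times Y\to S$; write $\omega_{x,y}(a)=\omega(a,x,y)$.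 For both behaviors below, the value at $(\varepsilon,\varepsilon)$ is $\sum_{a\in A}\sigma(a)$. For $u=x_1\cdots x_n$, $v=y_1\cdots y_n$ with $n\ge 1$: $[\![\mathcal{A}]\!]_{1n}(u,v)=\sum_{(a_0,\dots,a_{n-1})\in A^{n}}\sigma(a_0)\cdot\omega_{x_1,y_1}(a_0)\cdot\delta_{x_1}(a_0,a_1)\cdot\omega_{x_2,y_2}(a_1)\cdot\delta_{x_2}(a_1,a_2)\cdots\omega_{x_{n-1},y_{n-1}}(a_{n-2})\cdot\delta_{x_{n-1}}(a_{n-2},a_{n-1})\cdot\omega_{x_n,y_n}(a_{n-1})$; $[\![\mathcal{A}]\!]_{n1}(u,v)=\sum_{(a_0,\dots,a_{n-1})\in A^{n}}\sigma(a_0)\cdot\omega_{x_1,y_1}(a_0)\cdot\delta_{x_1}(a_0,a_1)\cdot\omega_{x_2,y_2}(a_1)\cdot\delta_{x_1x_2}(a_0,a_2)\cdot\omega_{x_3,y_3}(a_2)\cdots\delta_{x_1\cdots x_{n-1}}(a_0,a_{n-1})\cdot\omega_{x_n,y_n}(a_{n-1})$. A Moore-type weighted automaton over $S$ is $\mathcal{B}=(B,X,Y,\sigma,\delta,\omega)$ with $\sigma:B\to S$, $\delta:B\times X\times B\to S$, $\omega:B\times Y\to S$; write $\omega_y(b)=\omega(b,y)$. Both behaviors have value $\sum_{b\in B}\sigma(b)$ at $(\varepsilon,\varepsilon)$, and for $u=x_1\cdots x_n$, $v=y_1\cdots y_n$, $n\ge1$: $[\![\mathcal{B}]\!]_{1n}(u,v)=\sum_{(b_0,\dots,b_n)\in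 B^{n+1}}\sigma(b_0)\cdot\delta_{x_1}(b_0,b_1)\cdot\omega_{y_1}(b_1)\cdot\delta_{x_2}(b_1,b_2)\cdot\omega_{y_2}(b_2)\cdots\delta_{x_n}(b_{n-1},b_n)\cdot\omega_{y_n}(b_n)$; $[\![\mathcal{B}]\!]_{n1}(u,v)=\sum_{(b_0,\dots,b_n)\in B^{n+1}}\sigma(b_0)\cdot\delta_{x_1}(b_0,b_1)\cdot\omega_{y_1}(b_1)\cdot\delta_{x_1x_2}(b_0,b_2)\cdot\omega_{y_2}(b_2)\cdots\delta_{x_1\cdots x_n}(b_0,b_n)\cdot\omega_{y_n}(b_n)$. *)

From HB Require Import structures.
From mathcomp Require Import all_boot all_order all_algebra.
Set Implicit Arguments. Unset Strict Implicit. Unset Printing Implicit Defensive.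
Import GRing.Theory.
Local Open Scope ring_scope.

(* Words over X x Y (= pairs (u,v) with |u| = |v|) are sequences of pairs. *)

Section WA.
Variables (S : pzSemiRingType) (X Y : finType).

Fixpoint deltaw (Q : finType) (delta : Q -> X -> Q -> S) (w : seq X) : Q -> Q -> S :=
  match w with
  | [::] => fun p q => (p == q)%:R
  | x :: w' => fun p q => \sum_(r : Q) delta p x r * deltaw delta w' r q
  end.

Definition mealy_1n (A : finType) (sigma : A -> S) (delta : A -> X -> A -> S)
  (omega : A -> X -> Y -> S) (w : seq (X * Y)) : S :=
  match w with
  | [::] => \sum_(a : A) sigma a
  | p :: w' =>
    let n := (size w').+1 in
    let t : n.-tuple (X * Y) := in_tuple (p :: w') in
    \sum_(a : {ffun 'I_n -> A})
      (sigma (a ord0) *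
       \prod_(i < n)
         (omega (a i) (tnth t i).1 (tnth t i).2 *
          (if (i.+1 < n)%N then delta (a i) (tnth t i).1 (a (inord i.+1)) else 1)))
  end.

Definition mealy_n1 (A : finType) (sigma : A -> S) (delta : A -> X -> A -> S)
  (omega : A -> X -> Y -> S) (w : seq (X * Y)) : S :=
  match w with
  | [::] => \sum_(a : A) sigma a
  | p :: w' =>
    let n := (size w').+1 in
    let t : n.-tuple (X * Y) := in_tuple (p :: w') in
    \sum_(a : {ffun 'I_n -> A})
      (sigma (a ord0) *
       \prod_(i < n)
         (omega (a i) (tnth t i).1 (tnth t i).2 *
          (if (i.+1 < n)%N then
             deltaw delta (take i.+1 (map fst (p :: w'))) (a ord0) (a (inord i.+1))
           else 1)))
  end.

Definition moore_1n (B : finType) (sigma : B -> S) (delta : B -> X -> B -> S)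
  (omega : B -> Y -> S) (w : seq (X * Y)) : S :=
  match w with
  | [::] => \sum_(b : B) sigma b
  | p :: w' =>
    let n := (size w').+1 in
    let t : n.-tuple (X * Y) := in_tuple (p :: w') in
    \sum_(b : {ffun 'I_n.+1 -> B})
      (sigma (b ord0) *
       \prod_(i < n)
         (delta (b (inord i)) (tnth t i).1 (b (inord i.+1)) *
          omega (b (inord i.+1)) (tnth t i).2))
  end.

Definition moore_n1 (B : finType) (sigma : B -> S) (delta : B -> X -> B -> S)
  (omega : B -> Y -> S) (w : seq (X * Y)) : S :=
  match w with
  | [::] => \sum_(b : B) sigma b
  | p :: w' =>
    let n := (size w').+1 in
    let t : n.-tuple (X * Y) := in_tuple (p :: w') in
    \sum_(b : {ffun 'I_n.+1 -> B})
      (sigma (b ord0) *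
       \prod_(i < n)
         (deltaw delta (take i.+1 (map fst (p :: w'))) (b ord0) (b (inord i.+1)) *
          omega (b (inord i.+1)) (tnth t i).2))
  end.

End WA.

From HB Require Import structures.
From mathcomp Require Import all_boot all_order all_algebra.
Set Implicit Arguments. Unset Strict Implicit. Unset Printing Implicit Defensive.
Import GRing.Theory.
Local Open Scope ring_scope.

(* The Moore automaton remembers the letter it has just read: its states are
   pairs (a, Some x), "the Mealy automaton is in state a and reads x", together
   with copies (a, None) of the initial states.  A Mealy run a_0 ... a_(n-1) on
   x_1 ... x_n lifts to the Moore run (a_0, None), (a_0, Some x_1), ...,
   (a_(n-1), Some x_n), which carries the same weight; every Moore run that is
   not such a lift has weight 0.  For the n1 semantics the first Moore step is
   the identity, so the Moore word transition on x_1 ... x_k from (a_0, None)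
   is the Mealy word transition on x_1 ... x_(k-1). *)

Section SemiringBigops.
Variable S : pzSemiRingType.

Lemma sum_mul_eq_natr (I : finType) (F : I -> S) j : \sum_i F i * (i == j)%:R = F j.
Proof.
rewrite (bigD1 j) //= eqxx mulr1 big1 ?addr0 // => i /negbTE ->.
by rewrite mulr0.
Qed.

Lemma sum_mul_eq_natl (I : finType) (F : I -> S) j : \sum_i (j == i)%:R * F i = F j.
Proof.
rewrite (bigD1 j) //= eqxx mul1r big1 ?addr0 // => i.
by rewrite eq_sym => /negbTE ->; rewrite mul0r.
Qed.

Lemma prodr_seq_eq0 (I : eqType) (r : seq I) (F : I -> S) i :
  i \in r -> F i = 0 -> \prod_(j <- r) F j = 0.
Proof.
elim: r => [//|j r IHr]; rewrite inE big_cons => /orP[/eqP <- -> | r_i Fi0].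
  by rewrite mul0r.
by rewrite IHr // mulr0.
Qed.

Lemma prodr_ord_eq0 n (F : 'I_n -> S) i : F i = 0 -> \prod_(j < n) F j = 0.
Proof. exact/prodr_seq_eq0/mem_index_enum. Qed.

Lemma prodr_mul_shift n (f g : nat -> S) :
  \prod_(i < n.+1) (f i * g i) = f 0%N * \prod_(i < n) (g i * f i.+1) * g n.
Proof.
elim: n => [|n IHn]; first by rewrite big_ord1 big_ord0 mulr1.
by rewrite big_ord_recr /= IHn big_ord_recr /= !mulrA.
Qed.

Lemma prodr_mul_shift_eq n (f g h : nat -> S) :
  f 0%N = 1 -> h n = 1 -> (forall i, (i < n)%N -> f i.+1 = h i) ->
  \prod_(i < n.+1) (f i * g i) = \prod_(i < n.+1) (g i * h i).
Proof.
move=> f0 hn fS; rewrite prodr_mul_shift f0 mul1r big_ord_recr /= hn mulr1.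
by congr (_ * _); apply: eq_bigr => i _; rewrite fS.
Qed.

Lemma sum_retract (I J : finType) (F : J -> S) (G : I -> S)
    (lift : I -> J) (proj : J -> I) :
  cancel lift proj -> (forall j, lift (proj j) != j -> F j = 0) ->
  (forall i, F (lift i) = G i) -> \sum_j F j = \sum_i G i.
Proof.
move=> liftK F0 F_lift.
rewrite (bigID (fun j => lift (proj j) == j)) /= [X in _ + X]big1 ?addr0 //.
rewrite (reindex_onto lift proj) /=; last by move=> j /eqP.
by apply: eq_big => [i|i _]; rewrite ?liftK ?eqxx.
Qed.

End SemiringBigops.

Section WordTransitions.
Variables (S : pzSemiRingType) (X Q : finType) (delta : Q -> X -> Q -> S).

Lemma deltaw_seq1 x p q : deltaw delta [:: x] p q = delta p x q.
Proof. by rewrite /= sum_mul_eq_natr. Qed.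

Lemma deltaw_rcons w x p q :
  deltaw delta (rcons w x) p q = \sum_r deltaw delta w p r * delta r x q.
Proof.
elim: w p => [|y w IHw] p /=; first by rewrite sum_mul_eq_natr sum_mul_eq_natl.
under eq_bigr => r _ do rewrite IHw mulr_sumr.
rewrite exchange_big; apply: eq_bigr => s _; rewrite mulr_suml.
by apply: eq_bigr => r _; rewrite mulrA.
Qed.

End WordTransitions.

Section MooreOfMealy.
Variables (S : pzSemiRingType) (X Y A : finType)
  (sigma : A -> S) (delta : A -> X -> A -> S) (omega : A -> X -> Y -> S).

Definition moore_sigma (b : A * option X) : S :=
  if b.2 is None then sigma b.1 else 0.

Definition moore_delta (b : A * option X) (x : X) (b' : A * option X) : S :=
  if b'.2 == Some x then
    if b.2 is Some x0 then delta b.1 x0 b'.1 else (b.1 == b'.1)%:R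
  else 0.

Definition moore_omega (b : A * option X) (y : Y) : S :=
  if b.2 is Some x then omega b.1 x y else 0.

Lemma sum_moore_sigma : \sum_b moore_sigma b = \sum_a sigma a.
Proof.
rewrite (_ : \sum_b _ = \sum_a \sum_s moore_sigma (a, s)); last first.
  by rewrite pair_bigA; apply: eq_bigr => -[].
apply: eq_bigr => a _.
by rewrite (bigD1 None) //= big1 ?addr0 // => -[].
Qed.

Lemma moore_delta_eq0 b x b' : b'.2 != Some x -> moore_delta b x b' = 0.
Proof. by rewrite /moore_delta => /negbTE ->. Qed.

Lemma deltaw_moore_eq0 w x b b' :
  b'.2 != Some x -> deltaw moore_delta (rcons w x) b b' = 0.
Proof.
by move=> b'x; rewrite deltaw_rcons big1 // => r _; rewrite moore_delta_eq0 ?mulr0.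
Qed.

Lemma deltaw_moore_initial w x a a' s :
  deltaw moore_delta (rcons w x) (a, None) (a', s) =
  if s == Some x then deltaw delta w a a' else 0.
Proof.
elim/last_ind: w x a' s => [|w x0 IHw] x a' s.
  by rewrite deltaw_seq1 /moore_delta /=; case: ifP.
rewrite deltaw_rcons (_ : \sum_r _ = \sum_c \sum_t deltaw moore_delta (rcons w x0)
  (a, None) (c, t) * moore_delta (c, t) x (a', s)); last first.
  by rewrite pair_bigA; apply: eq_bigr => -[].
have read_x0 c : \sum_t deltaw moore_delta (rcons w x0) (a, None) (c, t) *
    moore_delta (c, t) x (a', s) = deltaw delta w a c * moore_delta (c, Some x0) x (a', s).
  rewrite (bigD1 (Some x0)) //= IHw eqxx big1 ?addr0 // => t /negbTE t_x0.
  by rewrite IHw t_x0 mul0r.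
under eq_bigr => c _ do rewrite read_x0.
rewrite /moore_delta /=; case: ifP => _; last by rewrite big1 // => c _; rewrite mulr0.
by rewrite deltaw_rcons.
Qed.

End MooreOfMealy.

Section LiftedRuns.
Variables (S : pzSemiRingType) (X Y A : finType)
  (sigma : A -> S) (delta : A -> X -> A -> S) (omega : A -> X -> Y -> S).
Variables (p : X * Y) (w : seq (X * Y)).
Local Notation n := (size w).
Local Notation B := (A * option X)%type.

(* 0-based: [input k] is the letter x_(k+1). *)
Definition input k : X := (nth p (p :: w) k).1.

Definition lift_run (a : {ffun 'I_n.+1 -> A}) : {ffun 'I_n.+2 -> B} :=
  [ffun j : 'I_n.+2 =>
     if nat_of_ord j is k.+1 then (a (inord k), Some (input k)) else (a ord0, None)].

Definition proj_run (b : {ffun 'I_n.+2 -> B}) : {ffun 'I_n.+1 -> A} :=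
  [ffun i : 'I_n.+1 => (b (inord i.+1)).1].

Lemma lift_run0 a : lift_run a ord0 = (a ord0, None).
Proof. by rewrite ffunE. Qed.

Lemma lift_runS a k :
  (k < n.+1)%N -> lift_run a (inord k.+1) = (a (inord k), Some (input k)).
Proof. by move=> lt_k; rewrite ffunE inordK. Qed.

Lemma lift_runK : cancel lift_run proj_run.
Proof. by move=> a; apply/ffunP => i; rewrite ffunE lift_runS // inord_val. Qed.

Lemma lift_proj_runN b : lift_run (proj_run b) != b ->
  [\/ (b ord0).2 != None, (b ord0).1 != (b (inord 1)).1
    | exists i : 'I_n.+1, (b (inord i.+1)).2 != Some (input i)].
Proof.
move=> b_not_lift; have [[[|k] lt_k] b_j] : exists j, b j != lift_run (proj_run b) j.
  apply/existsP; rewrite -negb_forall; apply: contra b_not_lift => /forallP b_lift.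
  by apply/eqP/ffunP => j; apply/esym/eqP/b_lift.
- rewrite (_ : Ordinal lt_k = ord0) ?lift_run0 ?ffunE //= in b_j; last exact: val_inj.
  case: (b ord0) b_j => c [x _|/=]; first by apply: Or31.
  by move=> b_j; apply: Or32; apply: contra b_j => /eqP ->.
- have lt_k' : (k < n.+1)%N by [].
  rewrite (_ : Ordinal lt_k = inord k.+1) in b_j *; last by apply: val_inj; rewrite /= inordK.
  apply: Or33; exists (Ordinal lt_k'); apply: contra b_j.
  by rewrite lift_runS // ffunE inordK //=; case: (b _) => c s /= /eqP ->.
Qed.

(* [D i] stands for the transition factor of step [i] in either semantics. *)
Lemma moore_weight_eq0 (D : 'I_n.+1 -> S) (b : {ffun 'I_n.+2 -> B}) :
  (forall i : 'I_n.+1, (b (inord i.+1)).2 != Some (input i) -> D i = 0) ->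
  ((b ord0).2 = None -> (b ord0).1 != (b (inord 1)).1 -> D ord0 = 0) ->
  lift_run (proj_run b) != b ->
  moore_sigma sigma (b ord0) *
    \prod_(i < n.+1) (D i * moore_omega omega (b (inord i.+1)) (tnth (in_tuple (p :: w)) i).2)
  = 0.
Proof.
move=> D_input D_init /lift_proj_runN[b0_read | b01 | [i b_i]].
- by case b0: (b ord0).2 b0_read => // _; rewrite /moore_sigma b0 mul0r.
- case b0: (b ord0).2 => [x|]; first by rewrite /moore_sigma b0 mul0r.
  by rewrite (prodr_ord_eq0 (i := ord0)) ?mulr0 // D_init ?mul0r.
- by rewrite (prodr_ord_eq0 (i := i)) ?mulr0 // D_input ?mul0r.
Qed.

Lemma mealy_moore_1n_cons :
  mealy_1n sigma delta omega (p :: w) =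
  moore_1n (moore_sigma sigma) (moore_delta delta) (moore_omega omega) (p :: w).
Proof.
rewrite /mealy_1n /moore_1n /=; symmetry.
apply: (sum_retract lift_runK) => [b|a].
  apply: moore_weight_eq0 => [i b_i|b0 b01].
    by rewrite moore_delta_eq0 // (tnth_nth p).
  by rewrite (inord_val ord0) /moore_delta b0 /=; case: ifP => // _; rewrite (negbTE b01).
rewrite lift_run0; congr (_ * _).
pose om k := omega (a (inord k)) (input k) (nth p (p :: w) k).2.
pose e k := if k is k'.+1 then delta (a (inord k')) (input k') (a (inord k)) else 1.
pose d k := if (k.+1 < n.+1)%N then delta (a (inord k)) (input k) (a (inord k.+1)) else 1.
transitivity (\prod_(i < n.+1) (e i * om i)).
  apply: eq_bigr => -[[|k] lt_k] _; rewrite (tnth_nth p) /=.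
    rewrite (inord_val ord0) lift_run0 lift_runS // (inord_val ord0).
    by rewrite /moore_delta /om /= !eqxx (inord_val ord0) mul1r.
  by rewrite !lift_runS ?(ltnW lt_k) // /moore_delta /= eqxx.
rewrite (@prodr_mul_shift_eq _ n e om d) //.
- by apply: eq_bigr => i _; rewrite /om /d (tnth_nth p) inord_val.
- by rewrite /d ltnn.
- by move=> i lt_i; rewrite /d /e ltnS lt_i.
Qed.

Lemma mealy_moore_n1_cons :
  mealy_n1 sigma delta omega (p :: w) =
  moore_n1 (moore_sigma sigma) (moore_delta delta) (moore_omega omega) (p :: w).
Proof.
rewrite /mealy_n1 /moore_n1; symmetry.
have take_inputs k : (k < n.+1)%N ->
    take k.+1 (map fst (p :: w)) = rcons (take k (map fst (p :: w))) (input k).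
  by move=> lt_k; rewrite (take_nth p.1) ?size_map // (nth_map p).
apply: (sum_retract lift_runK) => [b|a].
  apply: moore_weight_eq0 => [i b_i|b0 b01].
    by rewrite take_inputs // deltaw_moore_eq0.
  rewrite /= take0 sum_mul_eq_natr /moore_delta b0 /=.
  by case: ifP => // _; rewrite (negbTE b01).
rewrite lift_run0; congr (_ * _).
pose om k := omega (a (inord k)) (input k) (nth p (p :: w) k).2.
pose e k := deltaw delta (take k (map fst (p :: w))) (a ord0) (a (inord k)).
pose d k := if (k.+1 < n.+1)%N then e k.+1 else 1.
transitivity (\prod_(i < n.+1) (e i * om i)).
  apply: eq_bigr => -[k lt_k] _; rewrite (tnth_nth p) lift_runS //.
  by rewrite take_inputs // deltaw_moore_initial eqxx.
rewrite (@prodr_mul_shift_eq _ n e om d) //.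
- by apply: eq_bigr => i _; rewrite /om /d /e (tnth_nth p) inord_val.
- by rewrite /e /= (inord_val ord0) eqxx.
- by rewrite /d ltnn.
- by move=> i lt_i; rewrite /d ltnS lt_i.
Qed.
End LiftedRuns.

Theorem theorem4 (S : pzSemiRingType) (X Y A : finType)
  (sigA : A -> S) (delA : A -> X -> A -> S) (omA : A -> X -> Y -> S) :
  (0 < #|X|)%N -> (0 < #|Y|)%N -> (0 < #|A|)%N ->
  exists (B : finType) (sigB : B -> S) (delB : B -> X -> B -> S) (omB : B -> Y -> S),
    [/\ (0 < #|B|)%N, (#|B| <= #|A| * #|X|.+1)%N,
        (forall w : seq (X * Y), mealy_1n sigA delA omA w = moore_1n sigB delB omB w) &
        (forall w : seq (X * Y), mealy_n1 sigA delA omA w = moore_n1 sigB delB omB w)].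
Proof.
move=> _ _ A_gt0.
exists (A * option X)%type, (moore_sigma sigA), (moore_delta delA), (moore_omega (X := X) omA).
rewrite card_prod card_option; split => //; first by rewrite muln_gt0 A_gt0.
- by case=> [|p w]; [rewrite /= sum_moore_sigma | exact: mealy_moore_1n_cons].
- by case=> [|p w]; [rewrite /= sum_moore_sigma | exact: mealy_moore_n1_cons].
Qed.
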